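(* Let $\{z_n\}$ be a sequence of non-zero complex numbers with $|z_n|\to\infty$ whose classical exponent of convergence is less than $1$, and let $P(z)=\prod_n(1-z/z_n)$ be its canonical product. Suppose $\{z_n\}$ has finite $\varphi$-exponent of convergence $\lambda\ge0$. Let $\varphi$ and $s$ be differentiable with $\limsup_{r\to\infty}\frac{r^2s'(r)}{s(r)^2}<\infty$, and suppose $$\limsup_{r\to\infty}\frac{\varphi'(s(r))s'(r)r}{\varphi(s(r))}<\frac1\lambda\quad\text{or}\quad\liminf_{r\to\infty}\frac{\varphi'(s(r))s'(r)r}{\varphi(s(r))}\ge\frac1\lambda$$ (with $1/0=\infty$). Let $\varepsilon>0$ and $r_n=|z_n|$. If $z$ lies outside the discs $D_n=\{z:|z-z_n|\le r_n^{-(\lambda+\varepsilon)}\}$, then $$\log\frac{1}{|P(z)|}=O\left(\varphi(s(r))^{\lambda+\varepsilon}\log r\right),\quad |z|=r\to\infty.$$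
   Context: Let $R_0>0$. $\varphi:(R_0,\infty)\to(0,\infty)$ is a non-decreasing unbounded function with $\log r\le\varphi(r)\le r$ for $r\ge R_0$; $s:(R_0,\infty)\to(0,\infty)$ is non-decreasing with $r<s(r)\le r^2$ for $r\ge R_0$ and $\liminf_{r\to\infty}s(r)/r>1$. The $\varphi$-exponent of convergence of $\{z_n\}$ is $\inf\{\mu>0:\sum_n\varphi(|z_n|)^{-\mu}<\infty\}$ ($=\infty$ if the sum diverges for all $\mu>0$). *)

From HB Require Import structures.
From mathcomp Require Import all_boot all_order all_algebra.
From mathcomp Require Import all_classical all_reals all_analysis.
From mathcomp Require Import complex.
Set Implicit Arguments. Unset Strict Implicit. Unset Printing Implicit Defensive.
Import Order.TTheory GRing.Theory Num.Theory.
Import numFieldNormedType.Exports.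
Local Open Scope classical_set_scope.
Local Open Scope ring_scope.

Definition Cx (R : realType) : numClosedFieldType := R[i].

Definition cabs (R : realType) (x : Cx R) : R :=
  Num.sqrt (complex.Re x ^+ 2 + complex.Im x ^+ 2).

(* Since f is only
   defined on (R0, oo) and |z_n| -> oo, the finitely many terms with
   |z_n| <= R0 are dropped (this does not affect convergence). *)
Definition conv_exps (R : realType) (f : R -> R) (R0 : R) (z : nat -> Cx R)
  : set R :=
  [set mu | 0 < mu /\
     cvgn (series (fun n => if R0 < cabs (z n) then f (cabs (z n)) `^ (- mu)
                           else 0))].

(* f-exponent of convergence: inf of the above set, +oo if it is empty *)
Definition f_exp_conv (R : realType) (f : R -> R) (R0 : R) (z : nat -> Cx R)
  : \bar R :=
  ereal_inf [set (mu%:E)%E | mu in conv_exps f R0 z].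

Definition exp_conv (R : realType) (z : nat -> Cx R) : \bar R :=
  f_exp_conv id 0 z.

Definition canon_prod (R : realType) (z : nat -> Cx R) (w : Cx R) : Cx R :=
  limn (fun N : nat => \prod_(n < N) (1 - w / z n)).

Definition inv_ext (R : realType) (l : R) : \bar R :=
  if l == 0 then +oo%E else (l^-1)%:E.

Definition growth_ratio (R : realType) (phi s : R -> R) (r : R) : R :=
  derive1 phi (s r) * derive1 s r * r / phi (s r).

From HB Require Import structures.
From mathcomp Require Import all_boot all_order all_algebra.
From mathcomp Require Import all_classical all_reals all_analysis.
From mathcomp Require Import complex ring lra.
Set Implicit Arguments. Unset Strict Implicit. Unset Printing Implicit Defensive.
Import Order.TTheory GRing.Theory Num.Theory.
Import numFieldNormedType.Exports.
Local Open Scope classical_set_scope.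
Local Open Scope ring_scope.

(* Write r_n = |z_n| and L = lambda + eps.  For w outside the discs,
   |ln |1 - w/z_n|| <= 2 r/r_n when r_n >= 2r, and <= K ln r when r_n <= 2r,
   with K depending only on L and inf r_n.  Hence, given "dominating weights"
   (a summable v_n and G(r) = O(phi(s r)^L) with 1 <= G(r) v_n for the near
   zeros and r/r_n <= G(r) v_n for the far ones), every partial product
   satisfies |ln |P_N(w)|| <= K ln r G(r) sum v_n; since sum 1/r_n < oo the
   partial products converge and the bound passes to P(w).

   The weights come from the monotonicity of h_c(t) = ln phi(s t) - c ln t,
   whose derivative has the sign of growth_ratio - c:
   - if growth_ratio <= c < 1/lambda eventually, phi(s y) <= (y/x)^c phi(s x);
     take v_n = phi(r_n)^(-mu) with mu <= L a phi-convergence exponent and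
     G(r) = 2^(c mu) phi(s r)^mu;
   - if growth_ratio >= c eventually for all c < 1/lambda, take c = rho/L with
     rho < 1 a classical convergence exponent: then r^rho = O(phi(s r)^L),
     and v_n = r_n^(-rho), G(r) = 2 r^rho work. *)

Section ComplexModulus.
Variable R : realType.
Implicit Types x y : Cx R.

(* cabs is the norm of R[i] read back in R; its properties are inherited
   from those of the norm through the injective embedding R -> R[i]. *)
Lemma cabsE x : (cabs x)%:C%C = `|x|.
Proof. by rewrite normc_def. Qed.

Lemma cabs_ge0 x : 0 <= cabs x.
Proof. exact: sqrtr_ge0. Qed.

Lemma cabs_eq0 x : (cabs x == 0) = (x == 0).
Proof. by rewrite -(inj_eq (@complexI R)) cabsE normr_eq0. Qed.

Lemma cabs_gt0 x : x != 0 -> 0 < cabs x.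
Proof. by move=> x0; rewrite lt_def cabs_eq0 x0 cabs_ge0. Qed.

Lemma cabsM x y : cabs (x * y) = cabs x * cabs y.
Proof. by apply: (@complexI R); rewrite rmorphM /= !cabsE normrM. Qed.

Lemma cabsV x : cabs x^-1 = (cabs x)^-1.
Proof. by apply: (@complexI R); rewrite fmorphV /= !cabsE normfV. Qed.

Lemma cabsN x : cabs (- x) = cabs x.
Proof. by apply: (@complexI R); rewrite !cabsE normrN. Qed.

Lemma cabsB x y : cabs (x - y) = cabs (y - x).
Proof. by rewrite -cabsN opprB. Qed.

Lemma cabsD x y : cabs (x + y) <= cabs x + cabs y.
Proof. by rewrite -lecR rmorphD /= !cabsE ler_normD. Qed.

Lemma cabs_sub_ge x y : cabs x - cabs y <= cabs (x - y).
Proof. by rewrite lerBlDr -{1}(subrK y x) cabsD. Qed.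

Lemma cabs_prod (F : nat -> Cx R) N :
  cabs (\prod_(n < N) F n) = \prod_(n < N) cabs (F n).
Proof.
elim: N => [|N IH]; last by rewrite !big_ord_recr /= cabsM IH.
by rewrite !big_ord0; apply: (@complexI R); rewrite cabsE normr1.
Qed.

Lemma Re_le_cabs x : `|complex.Re x| <= cabs x.
Proof.
case: x => a b; rewrite /cabs /= -sqrtr_sqr.
by apply: ler_wsqrtr; rewrite lerDl sqr_ge0.
Qed.

Lemma Im_le_cabs x : `|complex.Im x| <= cabs x.
Proof.
case: x => a b; rewrite /cabs /= -sqrtr_sqr.
by apply: ler_wsqrtr; rewrite lerDr sqr_ge0.
Qed.

Lemma cabs_le_ReIm x : cabs x <= `|complex.Re x| + `|complex.Im x|.
Proof.
case: x => a b; rewrite /cabs /=.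
have h : a ^+ 2 + b ^+ 2 <= (`|a| + `|b|) ^+ 2.
  rewrite sqrrD !real_normK ?num_real // -addrA lerD2l lerDr.
  by rewrite mulrn_wge0 // mulr_ge0.
by apply: le_trans (ler_wsqrtr h) _; rewrite sqrtr_sqr ger0_norm // addr_ge0.
Qed.

End ComplexModulus.

Section LogEstimates.
Variable R : realType.

Lemma ln_le_subr1 (a : R) : 0 < a -> ln a <= a - 1.
Proof.
move=> a0; have := @le_ln1Dx R (a - 1); rewrite addrCA subrr addr0; apply; lra.
Qed.

Lemma ln_ge_1subV (a : R) : 0 < a -> 1 - a^-1 <= ln a.
Proof.
move=> a0; have := @ln_le_subr1 a^-1; rewrite invr_gt0 => /(_ a0).
by rewrite lnV ?posrE //; lra.
Qed.

(* a factor within x <= 1/2 of 1 has a logarithm of size at most 2x;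
   this handles the zeros far from w *)
Lemma ln_abs_near1 (x a : R) : 0 <= x -> x <= 2^-1 ->
  1 - x <= a -> a <= 1 + x -> `|ln a| <= 2 * x.
Proof.
move=> x0 x2 ha1 ha2.
have a0 : 0 < a by apply: lt_le_trans ha1; lra.
have up := ln_le_subr1 a0; have low := ln_ge_1subV a0.
have inv_a : a^-1 <= 1 + 2 * x.
  by rewrite -[a^-1]mul1r ler_pdivrMr //; nra.
rewrite ler_norml; apply/andP; split; lra.
Qed.

Definition near_const (m alpha : R) : R := 2 * (alpha + 1) + 1 + ln (1 + m^-1).

Lemma near_const_ge2 (m alpha : R) : 0 < m -> 0 <= alpha -> 2 <= near_const m alpha.
Proof.
move=> m0 al0; have lnm0 : 0 <= ln (1 + m^-1) by rewrite ln_ge0 // lerDl invr_ge0 ltW.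
by rewrite /near_const; apply: ler_wpDr lnm0 _; lra.
Qed.

(* a factor bounded above by 1 + r/m and below by rn^(-alpha)/rn with
   m <= rn <= 2r has a logarithm of size O(ln r); this handles the zeros
   near w, which lie outside the excluded disc around w *)
Lemma ln_abs_le_lnr (r rn m alpha a : R) : 0 < m -> m <= rn -> rn <= 2 * r ->
  1 <= ln r -> 0 <= alpha ->
  rn `^ (- alpha) / rn <= a -> a <= 1 + r / rn ->
  `|ln a| <= near_const m alpha * ln r.
Proof.
move=> m0 mrn rn2r lr1 al0 hal hau.
have rn0 : 0 < rn by apply: lt_le_trans mrn.
have r1 : 1 < r by rewrite ltNge; apply/negP => /ln_le0; lra.
have r0 : 0 < r by lra.
have m1 : 0 < 1 + m^-1 by rewrite addr_gt0 ?invr_gt0.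
have lm0 : 0 <= ln (1 + m^-1) by rewrite ln_ge0 // lerDl invr_ge0 ltW.
have a0 : 0 < a by apply: lt_le_trans hal; rewrite divr_gt0 ?powR_gt0.
have up : ln a <= ln (1 + m^-1) + ln r.
  rewrite -lnM ?posrE // ler_ln ?posrE ?mulr_gt0 //.
  have : r / rn <= r / m by rewrite ler_pM2l // lef_pV2 ?posrE.
  rewrite mulrDl mul1r [m^-1 * r]mulrC; lra.
have ln_rn : ln rn <= 2 * ln r.
  have ln2 : ln (2 : R) <= 1 by have := @ln_le_subr1 2; lra.
  have : ln rn <= ln (2 * r) by rewrite ler_ln ?posrE ?mulr_gt0.
  rewrite lnM ?posrE //; lra.
have low : - ((alpha + 1) * ln rn) <= ln a.
  apply: le_trans (_ : ln (rn `^ (- alpha) / rn) <= ln a).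
    by rewrite ln_div ?posrE ?powR_gt0 // ln_powR; lra.
  by rewrite ler_ln ?posrE ?divr_gt0 ?powR_gt0.
rewrite /near_const ler_norml; apply/andP; split; nra.
Qed.

End LogEstimates.

Section SummableIncrements.
Variable R : realType.

(* a real sequence whose increments are dominated by a summable sequence
   converges (its telescoping series converges absolutely) *)
Lemma cvg_summable_increments (u d : R ^nat) :
  (forall N, `|u N.+1 - u N| <= d N) -> cvgn (series d) -> cvgn u.
Proof.
move=> hud cd.
have ct : cvgn (series (telescope u)).
  apply: normed_cvg; apply: (series_le_cvg _ _ hud cd) => n //.
  exact: le_trans (normr_ge0 _) (hud n).
rewrite (_ : u = fun n => u 0%N + series (telescope u) n).
  exact: is_cvgD (is_cvg_cst _) ct.
by apply/funext => n; rewrite [LHS]eq_sum_telescope.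
Qed.

(* the same for complex sequences, applied to real and imaginary parts;
   the limit is also given in terms of the modulus cabs *)
Lemma cplx_cvg_summable_increments (p : nat -> Cx R) (d : R ^nat) :
  (forall N, cabs (p N.+1 - p N) <= d N) -> cvgn (series d) ->
  exists l, p @ \oo --> l /\
    forall e, 0 < e -> \forall N \near \oo, cabs (l - p N) < e.
Proof.
move=> hd cd.
have cRe : cvgn (fun N => complex.Re (p N)).
  apply: cvg_summable_increments cd => N.
  apply: le_trans (hd N); rewrite (_ : _ - _ = complex.Re (p N.+1 - p N)).
    exact: Re_le_cabs.
  by case: (p N.+1); case: (p N).
have cIm : cvgn (fun N => complex.Im (p N)).
  apply: cvg_summable_increments cd => N.
  apply: le_trans (hd N); rewrite (_ : _ - _ = complex.Im (p N.+1 - p N)).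
    exact: Im_le_cabs.
  by case: (p N.+1); case: (p N).
set l : Cx R := (limn (fun N => complex.Re (p N)) +i* limn (fun N => complex.Im (p N)))%C.
have close : forall e, 0 < e -> \forall N \near \oo, cabs (l - p N) < e.
  move=> e e0; have e2 : 0 < e / 2 by rewrite divr_gt0.
  move/cvgrPdist_lt: cRe => /(_ _ e2) hRe; move/cvgrPdist_lt: cIm => /(_ _ e2) hIm.
  near=> N; apply: le_lt_trans (cabs_le_ReIm _) _.
  have -> : complex.Re (l - p N) = limn (fun N => complex.Re (p N)) - complex.Re (p N).
    by case: (p N).
  have -> : complex.Im (l - p N) = limn (fun N => complex.Im (p N)) - complex.Im (p N).
    by case: (p N).
  by rewrite [e]splitr ltrD //; near: N.
exists l; split => //; apply/cvgrPdist_lt => -[a b]; rewrite ltcE /= => /andP[/eqP -> a0].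
by apply: filterS (close _ a0) => N hN; rewrite -cabsE ltcE /= eqxx hN.
Unshelve. all: by end_near.
Qed.

Lemma cabs_limit_bounds (p : nat -> Cx R) (l : Cx R) (a b : R) :
  (forall N, a <= cabs (p N) <= b) ->
  (forall e, 0 < e -> \forall N \near \oo, cabs (l - p N) < e) ->
  a <= cabs l <= b.
Proof.
move=> hab hl; apply/andP; split; apply/ler_addgt0Pr => e e0;
  have [N hN] := filter_ex (hl e e0); have /andP[ha hb] := hab N.
- have := cabs_sub_ge (p N) l; rewrite cabsB; lra.
- have := cabs_sub_ge l (p N); lra.
Qed.

Lemma series_le_limn (v : R ^nat) : (forall n, 0 <= v n) -> cvgn (series v) ->
  forall N, series v N <= limn (series v).
Proof.
move=> v0 cv N; apply: nondecreasing_cvgn_le => //.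
by apply: nondecreasing_series => n _ _; exact: v0.
Qed.

End SummableIncrements.

Section GrowthMonotonicity.
Variable R : realType.

Lemma is_derive1_comp (f g : R -> R) x :
  derivable f x 1 -> derivable g (f x) 1 ->
  is_derive x 1 (g \o f) (derive1 g (f x) * derive1 f x).
Proof.
move=> df dg; rewrite -derive1_comp // derive1E; apply: derivableP.
by apply/derivable1_diffP; apply: differentiable_comp; exact/derivable1_diffP.
Qed.

Lemma eventually_beyond (P : R -> Prop) (b : R) :
  (\forall r \near +oo, P r) -> exists a, b < a /\ forall t, a <= t -> P t.
Proof.
case=> M [_ HM]; exists (Num.max M b + 1); split=> [|t ht].
- by rewrite ltr_pwDr // le_max lexx orbT.
- by apply/HM/(lt_le_trans _ ht); rewrite ltr_pwDr // le_max lexx.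
Qed.

Variables (phi s : R -> R) (R0 : R).
Hypothesis hR0 : 0 < R0.
Hypothesis phi_pos : forall r, R0 < r -> 0 < phi r.
Hypothesis s_gt : forall r, R0 < r -> r < s r.
Hypothesis phi_der : forall r, R0 < r -> derivable phi r 1.
Hypothesis s_der : forall r, R0 < r -> derivable s r 1.

(* h_c(t) = ln (phi (s t) / t^c); comparing growth_ratio with c decides
   whether phi (s t) grows faster or slower than t^c *)
Definition log_growth (c t : R) : R := ln (phi (s t)) - c * ln t.

Lemma log_growth_derive c t : R0 < t ->
  is_derive t 1 (log_growth c) ((growth_ratio phi s t - c) / t).
Proof.
move=> tR0; have t0 : 0 < t := lt_trans hR0 tR0.
have stR0 : R0 < s t := lt_trans tR0 (s_gt tR0).
have pst := phi_pos stR0.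
have d_phis := is_derive1_comp (s_der tR0) (phi_der stR0).
have [d_phis' e_phis] := d_phis.
have [d_ln e_ln] := is_derive1_ln pst.
have d_lnphis := is_derive1_comp d_phis' d_ln.
have d_h := is_deriveB d_lnphis (is_deriveZ c (is_derive1_ln t0)).
have -> : log_growth c = (@ln R \o (phi \o s)) - c *: @ln R by apply/funext.
apply: trigger_derive d_h _.
rewrite !derive1E e_ln e_phis /growth_ratio /GRing.scale /=.
by field; rewrite !gt_eqF.
Qed.

Lemma log_growth_nincr c a : R0 < a ->
  (forall t, a < t -> growth_ratio phi s t <= c) ->
  forall x y, a <= x -> x <= y -> log_growth c y <= log_growth c x.
Proof.
move=> aR0 hc x y ax xy; have xR0 : R0 < x := lt_le_trans aR0 ax.
apply: (@ler0_derive1_nincr _ _ x y) => // [t|t|].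
- by rewrite in_itv /= => /andP[xt _]; case: (log_growth_derive c (lt_trans xR0 xt)).
- rewrite in_itv /= => /andP[xt _]; have tR0 := lt_trans xR0 xt.
  rewrite derive1E; case: (log_growth_derive c tR0) => _ ->.
  rewrite pmulr_lle0 ?invr_gt0 ?(lt_trans hR0 tR0) // subr_le0.
  exact/hc/(le_lt_trans ax xt).
- apply: derivable_within_continuous => t; rewrite in_itv /= => /andP[xt _].
  by case: (log_growth_derive c (lt_le_trans xR0 xt)).
Qed.

Lemma log_growth_ndecr c a : R0 < a ->
  (forall t, a < t -> c <= growth_ratio phi s t) ->
  forall x y, a <= x -> x <= y -> log_growth c x <= log_growth c y.
Proof.
move=> aR0 hc x y ax xy; have xR0 : R0 < x := lt_le_trans aR0 ax.
apply: (@ger0_derive1_ndecr _ _ x y) => // [t|t|].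
- by rewrite in_itv /= => /andP[xt _]; case: (log_growth_derive c (lt_trans xR0 xt)).
- rewrite in_itv /= => /andP[xt _]; have tR0 := lt_trans xR0 xt.
  rewrite derive1E; case: (log_growth_derive c tR0) => _ ->.
  rewrite divr_ge0 ?subr_ge0 ?(ltW (lt_trans hR0 tR0)) //.
  exact/hc/(le_lt_trans ax xt).
- apply: derivable_within_continuous => t; rewrite in_itv /= => /andP[xt _].
  by case: (log_growth_derive c (lt_le_trans xR0 xt)).
Qed.

Lemma ln_phi_s_growth c a : R0 < a ->
  (forall t, a < t -> growth_ratio phi s t <= c) ->
  forall x y, a <= x -> x <= y ->
  ln (phi (s y)) <= ln (phi (s x)) + c * (ln y - ln x).
Proof.
move=> aR0 hc x y ax xy; have := log_growth_nincr aR0 hc ax xy.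
by rewrite /log_growth; lra.
Qed.

End GrowthMonotonicity.

Section ProductBound.
Variable R : realType.

Lemma ln_prod (a : nat -> R) N : (forall n, 0 < a n) ->
  ln (\prod_(n < N) a n) = \sum_(n < N) ln (a n).
Proof.
move=> a0; elim: N => [|N IH]; first by rewrite !big_ord0 ln1.
rewrite !big_ord_recr /= lnM ?IH // posrE //; exact: prodr_gt0.
Qed.

Variables (z : nat -> Cx R) (w : Cx R) (m alpha G : R) (v : R ^nat).
Hypothesis z_nz : forall n, z n != 0.
Hypothesis m0 : 0 < m.
Hypothesis zm : forall n, m <= cabs (z n).
Hypothesis zinv : cvgn (series (fun n => (cabs (z n))^-1)).
Hypothesis al0 : 0 <= alpha.
Hypothesis lnw1 : 1 <= ln (cabs w).
Hypothesis disc : forall n, cabs (z n) `^ (- alpha) < cabs (w - z n).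
Hypothesis G0 : 0 <= G.
Hypothesis v0 : forall n, 0 <= v n.
Hypothesis cv : cvgn (series v).
Hypothesis hnear : forall n, cabs (z n) <= 2 * cabs w -> 1 <= G * v n.
Hypothesis hfar : forall n, 2 * cabs w <= cabs (z n) -> cabs w / cabs (z n) <= G * v n.

Local Notation r := (cabs w).
Local Notation K := (near_const m alpha).
Let K_ge2 : 2 <= K := near_const_ge2 m0 al0.

Let lnr0 : 0 <= ln r.
Proof. exact: le_trans lnw1. Qed.

Lemma cabs_factor n : cabs (1 - w / z n) = cabs (z n - w) / cabs (z n).
Proof. by rewrite -cabsV -cabsM mulrBl divff. Qed.

Lemma cabs_factor_bounds n :
  [/\ cabs (z n) `^ (- alpha) / cabs (z n) <= cabs (1 - w / z n),
      1 - r / cabs (z n) <= cabs (1 - w / z n) &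
      cabs (1 - w / z n) <= 1 + r / cabs (z n)].
Proof.
have rn0 : 0 < cabs (z n) := lt_le_trans m0 (zm n).
rewrite cabs_factor ler_pdivlMr // ler_pdivrMr // ler_pdivlMr //.
rewrite mulrBl mulrDl mul1r divfK ?gt_eqF // divfK ?gt_eqF //.
split; first by rewrite cabsB ltW.
- exact: cabs_sub_ge.
- by apply: le_trans (cabsD _ _) _; rewrite cabsN.
Qed.

Lemma factor_pos n : 0 < cabs (1 - w / z n).
Proof.
have [low _ _] := cabs_factor_bounds n; apply: lt_le_trans low.
by rewrite divr_gt0 ?powR_gt0 // (lt_le_trans m0 (zm n)).
Qed.

Lemma ln_factor_bound n : `|ln (cabs (1 - w / z n))| <= K * ln r * (G * v n).
Proof.
have rn0 : 0 < cabs (z n) := lt_le_trans m0 (zm n).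
have [low1 low2 up] := cabs_factor_bounds n.
have Gv0 : 0 <= G * v n by rewrite mulr_ge0.
have K2 := K_ge2; have lnr1 := lnw1.
have [far|near] := lerP (2 * r) (cabs (z n)).
- have x2 : r / cabs (z n) <= 2^-1 by rewrite ler_pdivrMr //; lra.
  have x0 : 0 <= r / cabs (z n) by rewrite divr_ge0 ?cabs_ge0 ?ltW.
  apply: le_trans (ln_abs_near1 x0 x2 low2 up) _.
  have hGv := hfar far.
  have : K * (G * v n) <= K * ln r * (G * v n).
    by rewrite -mulrA ler_pM2l ?ler_peMl //; lra.
  nra.
- apply: le_trans (ln_abs_le_lnr m0 (zm n) (ltW near) lnw1 al0 low1 up) _.
  by apply: ler_peMr; [apply: mulr_ge0; lra | exact/hnear/ltW].
Qed.

Let B := K * ln r * G * limn (series v).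
Let p N := \prod_(n < N) (1 - w / z n).

Lemma partial_prod_bounds N : expR (- B) <= cabs (p N) <= expR B.
Proof.
have pos : 0 < cabs (p N).
  by rewrite /p (cabs_prod (fun n => 1 - w / z n)); apply: prodr_gt0 => i _; exact: factor_pos.
suff : `|ln (cabs (p N))| <= B.
  by rewrite ler_norml => /andP[lo hi]; rewrite -(lnK pos) !ler_expR lo hi.
rewrite /p (cabs_prod (fun n => 1 - w / z n)).
rewrite (ln_prod (a := fun n => cabs (1 - w / z n))); last by move=> n; exact: factor_pos.
apply: le_trans (ler_norm_sum _ _ _) _.
apply: le_trans (ler_sum _ (fun (i : 'I_N) _ => ln_factor_bound i)) _.
have KL : 0 <= K * ln r by apply: mulr_ge0; have := K_ge2; have := lnw1; lra.
rewrite -mulr_sumr -mulr_sumr /B -mulrA ler_wpM2l // ler_wpM2l //.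
have -> : \sum_(i < N) v i = series v N by rewrite /series /= big_mkord.
exact: series_le_limn.
Qed.

Lemma partial_prod_step N : cabs (p N.+1 - p N) <= expR B * r * (cabs (z N))^-1.
Proof.
have -> : p N.+1 - p N = p N * (- (w / z N)).
  by rewrite /p big_ord_recr /= mulrBr mulr1 addrC addKr mulrN.
rewrite cabsM cabsN cabsM cabsV mulrA ler_wpM2r ?invr_ge0 ?cabs_ge0 //.
by rewrite ler_wpM2r ?cabs_ge0 //; case/andP: (partial_prod_bounds N).
Qed.

Lemma canon_prod_bound : `|ln (cabs (canon_prod z w))^-1| <= B.
Proof.
have cd : cvgn (series (fun N => expR B * r * (cabs (z N))^-1)).
  have -> : (fun N => expR B * r * (cabs (z N))^-1) =
    (expR B * r) *: (fun N => (cabs (z N))^-1) by [].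
  exact: is_cvg_seriesZ.
have [l [pl hl]] := cplx_cvg_summable_increments partial_prod_step cd.
have -> : canon_prod z w = l by apply: cvg_lim.
have /andP[lo hi] := cabs_limit_bounds partial_prod_bounds hl.
have l0 : 0 < cabs l := lt_le_trans (expR_gt0 _) lo.
rewrite lnV ?posrE // normrN ler_norml.
by rewrite -ler_expR -(ler_expR (ln _)) lnK ?posrE // lo hi.
Qed.

End ProductBound.

Section Weights.
Variable R : realType.

Definition dominating_weights (phi s : R -> R) (z : nat -> Cx R) (alpha : R)
    : Prop :=
  exists (G : R -> R) (v : R ^nat) (C a : R),
  [/\ (forall n, 0 <= v n), cvgn (series v), 0 <= C &
      forall r, a <= r -> [/\ 0 <= G r, G r <= C * phi (s r) `^ alpha,
        (forall n, cabs (z n) <= 2 * r -> 1 <= G r * v n) &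
        (forall n, 2 * r <= cabs (z n) -> r / cabs (z n) <= G r * v n)]].

Lemma modulus_bounded_below (z : nat -> Cx R) :
  (forall n, z n != 0) -> (fun n => cabs (z n)) @ \oo --> +oo ->
  exists m, 0 < m /\ forall n, m <= cabs (z n).
Proof.
move=> z_nz /cvgryPge /(_ 1) [N _ zN].
have [m [m0 hm]] : exists m, 0 < m /\ forall n, (n < N)%N -> m <= cabs (z n).
  elim: N {zN} => [|N [m [m0 hm]]]; first by exists 1.
  exists (Num.min m (cabs (z N))); rewrite lt_min m0 cabs_gt0 //.
  split=> // n; rewrite ltnS leq_eqVlt => /orP[/eqP ->|hn].
    by rewrite ge_min lexx orbT.
  by rewrite ge_min hm.
exists (Num.min m 1); rewrite lt_min m0 ltr01; split=> // n.
case: (ltnP n N) => hn; rewrite ge_min; first by rewrite hm.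
by rewrite zN ?orbT.
Qed.

Lemma exponent_below_one (z : nat -> Cx R) :
  (forall n, z n != 0) -> (exp_conv z < 1%:E)%E ->
  exists rho, [/\ 0 < rho, rho < 1 &
    cvgn (series (fun n => cabs (z n) `^ (- rho)))].
Proof.
move=> z_nz /ereal_inf_lt [_ [mu [mu0 cmu] <-]]; rewrite lte_fin => mu1.
exists mu; split => //; rewrite (_ : (fun n => _) =
  fun n => if 0 < cabs (z n) then id (cabs (z n)) `^ (- mu) else 0) //.
by apply/funext => n; rewrite cabs_gt0.
Qed.

Lemma inverse_moduli_summable (z : nat -> Cx R) (m : R) :
  (forall n, z n != 0) -> 0 < m -> (forall n, m <= cabs (z n)) ->
  (exp_conv z < 1%:E)%E -> cvgn (series (fun n => (cabs (z n))^-1)).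
Proof.
move=> z_nz m0 zm ze; have [rho [rho0 rho1 crho]] := exponent_below_one z_nz ze.
apply: (@series_le_cvg _ _ (fun n => m `^ (rho - 1) * cabs (z n) `^ (- rho))).
- by move=> n; rewrite invr_ge0 cabs_ge0.
- by move=> n; rewrite mulr_ge0 // powR_ge0.
- move=> n; have rn0 := cabs_gt0 (z_nz n).
  rewrite /powR !gt_eqF // -expRD -[_^-1]lnK ?posrE ?invr_gt0 // ler_expR lnV ?posrE //.
  have : ln m <= ln (cabs (z n)) by rewrite ler_ln ?posrE.
  nra.
- rewrite (_ : (fun n => _) = m `^ (rho - 1) *: (fun n => cabs (z n) `^ (- rho))) //.
  exact: is_cvg_seriesZ.
Qed.

Lemma bound_of_weights (phi s : R -> R) (z : nat -> Cx R) (alpha : R) :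
  (forall n, z n != 0) -> (fun n => cabs (z n)) @ \oo --> +oo ->
  (exp_conv z < 1%:E)%E -> 0 <= alpha -> dominating_weights phi s z alpha ->
  exists C R1, forall w, R1 <= cabs w ->
    (forall n, cabs (z n) `^ (- alpha) < cabs (w - z n)) ->
    `|ln (cabs (canon_prod z w))^-1|
      <= C * (phi (s (cabs w)) `^ alpha * ln (cabs w)).
Proof.
move=> z_nz z_inf ze al0 [G [v [C [a [v0 cv C0 hG]]]]].
have [m [m0 zm]] := modulus_bounded_below z_nz z_inf.
have zinv := inverse_moduli_summable z_nz m0 zm ze.
have K0 : 0 <= near_const m alpha by have := near_const_ge2 m0 al0; lra.
have S0 : 0 <= limn (series v).
  by have := series_le_limn v0 cv 0; rewrite /series /= big_geq.
exists (near_const m alpha * C * limn (series v)), (Num.max a (expR 1)).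
move=> w; rewrite ge_max => /andP[aw ew] disc.
have lnw1 : 1 <= ln (cabs w).
  by rewrite -ler_expR lnK // posrE (lt_le_trans (expR_gt0 _) ew).
have [G0 GC hnear hfar] := hG _ aw.
apply: le_trans (canon_prod_bound z_nz m0 zm zinv al0 lnw1 disc G0 v0 cv hnear hfar) _.
set K := near_const m alpha; set S := limn (series v).
set L := ln (cabs w); set P := phi (s (cabs w)) `^ alpha.
have -> : K * L * G (cabs w) * S = (K * L * S) * G (cabs w) by ring.
have -> : K * C * S * (P * L) = (K * L * S) * (C * P) by ring.
by rewrite ler_wpM2l // !mulr_ge0 // (le_trans _ lnw1).
Qed.

End Weights.

Section LiminfWeights.
Variable R : realType.

Lemma power_weight_near (r x rho : R) : 0 < r -> 0 < x -> 0 <= rho -> rho <= 1 ->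
  x <= 2 * r -> 1 <= 2 * r `^ rho * x `^ (- rho).
Proof.
move=> r0 x0 rho0 rho1 x2r; have ln2 : 0 <= ln (2 : R) by rewrite ln_ge0 // ler1n.
have hx : ln x <= ln 2 + ln r by rewrite -lnM ?posrE // ler_ln ?posrE ?mulr_gt0.
have e2 : (2 : R) = expR (ln 2) by rewrite lnK // posrE.
have h1 : rho * ln x <= rho * (ln 2 + ln r) by rewrite ler_wpM2l.
have h2 : rho * ln 2 <= ln 2 by rewrite ler_piMl.
by rewrite /powR !gt_eqF // e2 -!expRD -[X in X <= _]expR0 ler_expR; lra.
Qed.

Lemma power_weight_far (r x rho : R) : 0 < r -> r <= x -> 0 <= rho -> rho <= 1 ->
  r / x <= 2 * r `^ rho * x `^ (- rho).
Proof.
move=> r0 rx rho0 rho1; have x0 : 0 < x := lt_le_trans r0 rx.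
have ln2 : 0 <= ln (2 : R) by rewrite ln_ge0 // ler1n.
have hx : ln r <= ln x by rewrite ler_ln ?posrE.
have e2 : (2 : R) = expR (ln 2) by rewrite lnK // posrE.
rewrite /powR !gt_eqF // e2 -!expRD -[r / x]lnK ?posrE ?divr_gt0 //.
have h1 : (1 - rho) * (ln r - ln x) <= 0 by rewrite mulr_ge0_le0 ?subr_ge0 ?subr_le0.
have h2 : 0 <= rho * ln 2 by rewrite mulr_ge0.
by rewrite ler_expR ln_div ?posrE //; lra.
Qed.

Lemma rescaled_exponent_lt (rho lambda eps : R) : 0 < rho -> rho < 1 ->
  0 <= lambda -> 0 < eps -> ((rho / (lambda + eps))%:E < inv_ext lambda)%E.
Proof.
move=> rho0 rho1 l0 e0; rewrite /inv_ext; case: eqP => [_|/eqP l_neq0]; first exact: ltry.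
have lpos : 0 < lambda by rewrite lt_def l_neq0.
rewrite lte_fin ltr_pdivrMr ?ltr_wpDl //; apply: lt_le_trans rho1 _.
by rewrite mulrDr mulVf // lerDl mulr_ge0 ?invr_ge0 ?ltW.
Qed.

Variables (phi s : R -> R) (R0 : R) (z : nat -> Cx R) (lambda eps : R).
Hypothesis hR0 : 0 < R0.
Hypothesis phi_pos : forall r, R0 < r -> 0 < phi r.
Hypothesis s_gt : forall r, R0 < r -> r < s r.
Hypothesis phi_der : forall r, R0 < r -> derivable phi r 1.
Hypothesis s_der : forall r, R0 < r -> derivable s r 1.
Hypothesis z_nz : forall n, z n != 0.
Hypothesis z_exp : (exp_conv z < 1%:E)%E.
Hypothesis hlambda0 : 0 <= lambda.
Hypothesis heps : 0 < eps.

(* Case growth_ratio >= c eventually for every c < 1/lambda: with rho < 1 a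
   convergence exponent of |z_n| and c = rho/(lambda+eps), phi(s r)^(lambda+eps)
   grows at least like r^rho, so G r = 2 r^rho and v_n = |z_n|^(-rho) work. *)
Lemma weights_liminf :
  (forall c : R, (c%:E < inv_ext lambda)%E ->
     \forall r \near +oo, c <= growth_ratio phi s r) ->
  dominating_weights phi s z (lambda + eps).
Proof.
move=> ratio_ge.
have [rho [rho0 rho1 crho]] := exponent_below_one z_nz z_exp.
set L := lambda + eps; have L0 : 0 < L by rewrite /L; have := hlambda0; have := heps; lra.
set c := rho / L.
have cL : forall x, L * (c * x) = rho * x by move=> x; rewrite /c; field; rewrite gt_eqF.
have [a [aR0 ha]] := eventually_beyond R0
  (ratio_ge c (rescaled_exponent_lt rho0 rho1 hlambda0 heps)).
have mono := log_growth_ndecr hR0 phi_pos s_gt phi_der s_der aR0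
  (fun t at_ => ha t (ltW at_)).
exists (fun r => 2 * r `^ rho), (fun n => cabs (z n) `^ (- rho)),
  (2 * expR (rho * ln a - L * ln (phi (s a)))), a.
split=> [n|//||r ar].
- exact: powR_ge0.
- by rewrite mulr_ge0 ?expR_ge0.
have rR0 := lt_le_trans aR0 ar; have r0 := lt_trans hR0 rR0.
have psr : 0 < phi (s r) := phi_pos (lt_trans rR0 (s_gt rR0)).
split=> [|||n hn].
- by rewrite mulr_ge0 ?powR_ge0.
- (* h_c(a) <= h_c(r), multiplied by L, reads r^rho <= C phi(s r)^L *)
  have := mono a r (lexx a) ar; rewrite /log_growth => h.
  have h' := ler_wpM2l (ltW L0) h; rewrite !mulrBr !cL in h'.
  by rewrite -mulrA ler_pM2l // /powR !gt_eqF // -expRD ler_expR; lra.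
- move=> n hn.
  exact: power_weight_near r0 (cabs_gt0 (z_nz n)) (ltW rho0) (ltW rho1) hn.
- have r2r : r <= 2 * r := ler_peMl (ltW r0) (ler1n R 2).
  exact: power_weight_far r0 (le_trans r2r hn) (ltW rho0) (ltW rho1).
Qed.

End LiminfWeights.

Section PhiWeights.
Variable R : realType.

Lemma nonneg_exponent_below_inv (c lambda : R) : 0 <= lambda ->
  (c%:E < inv_ext lambda)%E -> exists c', [/\ 0 <= c', c <= c' & c' * lambda < 1].
Proof.
move=> l0 hc; have [c0|c_pos] := lerP c 0; first by exists 0; rewrite mul0r.
exists c; split=> //; first exact: ltW.
move: hc; rewrite /inv_ext; case: eqP => [->|/eqP l_neq0]; first by rewrite mulr0.
have lpos : 0 < lambda by rewrite lt_def l_neq0.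
by rewrite lte_fin -(ltr_pM2r lpos) mulVf.
Qed.

Definition phi_gauge (c mu q : R) : R := expR (c * mu * ln 2 + mu * ln q).

Lemma phi_gauge_ge1 (c mu q : R) : 0 <= c -> 0 <= mu -> 1 <= q ->
  1 <= phi_gauge c mu q.
Proof.
move=> c0 mu0 q1; rewrite /phi_gauge -[X in X <= _]expR0 ler_expR.
by rewrite addr_ge0 ?mulr_ge0 ?ln_ge0 // ler1n.
Qed.

Lemma phi_weight_near (c mu p q : R) : 0 <= c -> 0 < mu -> 0 < p ->
  ln p <= ln q + c * ln 2 -> 1 <= phi_gauge c mu q * p `^ (- mu).
Proof.
move=> c0 mu0 p0 hp; rewrite /phi_gauge /powR gt_eqF // -expRD.
rewrite -[X in X <= _]expR0 ler_expR.
by have := ler_wpM2l (ltW mu0) hp; lra.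
Qed.

Lemma phi_weight_far (c mu p q r x : R) : 0 <= c -> 0 < mu -> c * mu <= 1 ->
  0 < p -> 0 < r -> r <= x -> ln p <= ln q + c * (ln x - ln r) ->
  r / x <= phi_gauge c mu q * p `^ (- mu).
Proof.
move=> c0 mu0 cmu1 p0 r0 rx hp; have x0 : 0 < x := lt_le_trans r0 rx.
have ln2 : 0 <= ln (2 : R) by rewrite ln_ge0 // ler1n.
have dx : 0 <= ln x - ln r by rewrite subr_ge0 ler_ln ?posrE.
rewrite /phi_gauge /powR gt_eqF // -expRD -[r / x]lnK ?posrE ?divr_gt0 //.
rewrite ler_expR ln_div ?posrE //.
have h1 := ler_wpM2l (ltW mu0) hp.
have h2 : 0 <= (1 - c * mu) * (ln x - ln r) by rewrite mulr_ge0 // subr_ge0.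
have h3 := mulr_ge0 (mulr_ge0 c0 (ltW mu0)) ln2.
nra.
Qed.

Variables (phi : R -> R) (R0 : R) (z : nat -> Cx R).

(* the weights phi(|z_n|)^(-mu), replaced by 1 on the first N0 terms, where
   phi may be undefined *)
Definition phi_weight (N0 : nat) (mu : R) (n : nat) : R :=
  if (n < N0)%N then 1 else phi (cabs (z n)) `^ (- mu).

Lemma phi_weight_ge0 N0 mu n : 0 <= phi_weight N0 mu n.
Proof. by rewrite /phi_weight; case: ifP => // _; exact: powR_ge0. Qed.

Lemma phi_weight_summable N0 mu : (forall n, (N0 <= n)%N -> R0 < cabs (z n)) ->
  conv_exps phi R0 z mu -> cvgn (series (phi_weight N0 mu)).
Proof.
move=> zR0 [_ cmu]; rewrite -(is_cvg_series_restrict N0).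
move: cmu; rewrite -(is_cvg_series_restrict N0).
suff -> : (fun n => \sum_(N0 <= k < n)
    (if R0 < cabs (z k) then phi (cabs (z k)) `^ (- mu) else 0)) =
  (fun n => \sum_(N0 <= k < n) phi_weight N0 mu k) by [].
apply/funext => n; apply: eq_big_nat => k /andP[hk _].
by rewrite /phi_weight ltnNge hk /= zR0.
Qed.

Lemma conv_exp_near (lambda d : R) : f_exp_conv phi R0 z = lambda%:E -> 0 < d ->
  exists2 mu, conv_exps phi R0 z mu & 0 < mu < lambda + d.
Proof.
rewrite /f_exp_conv => hl d0.
have : (ereal_inf [set mu%:E | mu in conv_exps phi R0 z] < (lambda + d)%:E)%E.
  by rewrite hl lte_fin ltrDl.
case/ereal_inf_lt => _ [mu hmu <-]; rewrite lte_fin => mu_lt.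
by exists mu => //; rewrite mu_lt andbT; case: hmu.
Qed.

Lemma conv_exp_compatible (lambda eps c : R) : f_exp_conv phi R0 z = lambda%:E ->
  0 < eps -> 0 <= c -> c * lambda < 1 ->
  exists2 mu, conv_exps phi R0 z mu & [/\ 0 < mu, mu <= lambda + eps & c * mu <= 1].
Proof.
move=> hl e0 c0 cl; set q := (1 - c * lambda) / (c + 1).
have q0 : 0 < q by rewrite divr_gt0 // ?subr_gt0 // ltr_wpDl.
have cq : c * q <= 1 - c * lambda.
  have -> : 1 - c * lambda = (c + 1) * q by rewrite /q [RHS]mulrC divfK // gt_eqF // ltr_wpDl.
  by rewrite ler_pM2r // lerDl.
have d0 : 0 < Num.min eps q by rewrite lt_min e0 q0.
have [mu cmu /andP[mu0 mu_lt]] := conv_exp_near hl d0.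
exists mu => //; split => //.
- by apply: ltW (lt_le_trans mu_lt _); rewrite lerD2l ge_min lexx.
- have : mu <= lambda + q by apply: ltW (lt_le_trans mu_lt _); rewrite lerD2l ge_min lexx orbT.
  by move=> /(ler_wpM2l c0); rewrite mulrDr; lra.
Qed.

End PhiWeights.

Section LimsupCase.
Variable R : realType.
Variables (phi s : R -> R) (R0 : R) (z : nat -> Cx R) (lambda eps : R).
Hypothesis hR0 : 0 < R0.
Hypothesis phi_pos : forall r, R0 < r -> 0 < phi r.
Hypothesis phi_nd : forall r1 r2, R0 < r1 -> r1 <= r2 -> phi r1 <= phi r2.
Hypothesis phi_bounds : forall r, R0 < r -> ln r <= phi r /\ phi r <= r.
Hypothesis s_gt : forall r, R0 < r -> r < s r.
Hypothesis phi_der : forall r, R0 < r -> derivable phi r 1.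
Hypothesis s_der : forall r, R0 < r -> derivable s r 1.
Hypothesis z_inf : (fun n => cabs (z n)) @ \oo --> +oo.
Hypothesis hlambda0 : 0 <= lambda.
Hypothesis hlambda : f_exp_conv phi R0 z = lambda%:E.
Hypothesis heps : 0 < eps.

Lemma phi_s_ge1 r : R0 < r -> expR 1 <= r -> 1 <= phi (s r).
Proof.
move=> rR0 er; have r0 : 0 < r := lt_trans hR0 rR0.
have sR0 := lt_trans rR0 (s_gt rR0).
have [ln_le _] := phi_bounds sR0; apply: le_trans ln_le.
rewrite -[1](expRK 1) ler_ln ?posrE ?expR_gt0 ?(lt_trans r0 (s_gt rR0)) //.
exact: le_trans er (ltW (s_gt rR0)).
Qed.

Lemma ln_phi_near (c a r x : R) : R0 < a -> a <= r -> R0 < x -> x <= 2 * r ->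
  (forall x y, a <= x -> x <= y ->
     ln (phi (s y)) <= ln (phi (s x)) + c * (ln y - ln x)) ->
  ln (phi x) <= ln (phi (s r)) + c * ln 2.
Proof.
move=> aR0 ar xR0 x2r growth; have rR0 := lt_le_trans aR0 ar.
have r0 := lt_trans hR0 rR0; have r2R0 : R0 < 2 * r by lra.
have : phi x <= phi (s (2 * r)).
  by apply: le_trans (phi_nd xR0 x2r) _; apply/phi_nd/ltW/s_gt.
rewrite -ler_ln ?posrE ?phi_pos ?(lt_trans r2R0 (s_gt r2R0)) //.
have := growth r (2 * r) ar (ler_peMl (ltW r0) (ler1n R 2)).
by rewrite lnM ?posrE //; lra.
Qed.

Lemma ln_phi_far (c a r x : R) : R0 < a -> a <= r -> r <= x ->
  (forall x y, a <= x -> x <= y ->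
     ln (phi (s y)) <= ln (phi (s x)) + c * (ln y - ln x)) ->
  ln (phi x) <= ln (phi (s r)) + c * (ln x - ln r).
Proof.
move=> aR0 ar rx growth; have xR0 := lt_le_trans (lt_le_trans aR0 ar) rx.
have : phi x <= phi (s x) by apply/phi_nd/ltW/s_gt.
rewrite -ler_ln ?posrE ?phi_pos ?(lt_trans xR0 (s_gt xR0)) //.
by have := growth r x ar rx; lra.
Qed.

(* Case growth_ratio <= c < 1/lambda eventually: phi (s y) <= (y/x)^c' phi (s x)
   for large x <= y, so with mu <= lambda + eps a phi-convergence exponent
   such that c' mu <= 1, the weights phi(|z_n|)^(-mu) and
   G r = 2^(c' mu) phi(s r)^mu work. *)
Lemma weights_limsup :
  (exists c : R, (c%:E < inv_ext lambda)%E /\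
     \forall r \near +oo, growth_ratio phi s r <= c) ->
  dominating_weights phi s z (lambda + eps).
Proof.
case=> c [hc ev]; have [c' [c'0 cc' c'l]] := nonneg_exponent_below_inv hlambda0 hc.
have [mu cmu [mu0 muL cmu1]] := conv_exp_compatible hlambda heps c'0 c'l.
have [N0 _ zR0] : \forall n \near \oo, R0 < cabs (z n).
  by move/cvgryPgt: z_inf; apply.
have [a [aRe ha]] := eventually_beyond (Num.max R0 (expR 1)) ev.
move: aRe; rewrite gt_max => /andP[aR0 ae].
have growth := ln_phi_s_growth hR0 phi_pos s_gt phi_der s_der aR0
  (fun t at_ => le_trans (ha t (ltW at_)) cc').
exists (fun r => phi_gauge c' mu (phi (s r))), (phi_weight phi z N0 mu),
  (expR (c' * mu * ln 2)), a.
split=> [n|||r ar].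
- exact: phi_weight_ge0.
- exact: phi_weight_summable zR0 cmu.
- exact: expR_ge0.
have rR0 := lt_le_trans aR0 ar; have r0 := lt_trans hR0 rR0.
have psr1 := phi_s_ge1 rR0 (le_trans (ltW ae) ar).
have G1 := phi_gauge_ge1 c'0 (ltW mu0) psr1.
split=> [||n hn|n hn].
- exact: le_trans G1.
- rewrite /phi_gauge /powR gt_eqF ?(lt_le_trans ltr01 psr1) //.
  rewrite expRD ler_wpM2l ?expR_ge0 // ler_expR.
  by have := ler_wpM2r (ln_ge0 psr1) muL.
- rewrite /phi_weight; case: ifPn => [_|]; first by rewrite mulr1.
  rewrite -leqNgt => /zR0 rnR0.
  exact: phi_weight_near c'0 mu0 (phi_pos rnR0) (ln_phi_near aR0 ar rnR0 hn growth).
- have rrn : r <= cabs (z n) by lra.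
  rewrite /phi_weight; case: ifPn => [_|].
    rewrite mulr1; apply: le_trans G1.
    by rewrite ler_pdivrMr ?(lt_le_trans r0 rrn) // mul1r.
  rewrite -leqNgt => /zR0 rnR0.
  exact: phi_weight_far c'0 mu0 cmu1 (phi_pos rnR0) r0 rrn (ln_phi_far aR0 ar rrn growth).
Qed.

End LimsupCase.

Theorem lemma4p5 (R : realType) (R0 : R) (phi s : R -> R)
  (z : nat -> Cx R) (lambda : R)
  (* standing assumptions on phi *)
  (hR0 : 0 < R0)
  (phi_pos : forall r, R0 < r -> 0 < phi r)
  (phi_nd : forall r1 r2, R0 < r1 -> r1 <= r2 -> phi r1 <= phi r2)
  (phi_unb : forall M : R, exists r, R0 < r /\ M < phi r)
  (phi_bounds : forall r, R0 < r -> ln r <= phi r /\ phi r <= r)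
  (* standing assumptions on s *)
  (s_pos : forall r, R0 < r -> 0 < s r)
  (s_nd : forall r1 r2, R0 < r1 -> r1 <= r2 -> s r1 <= s r2)
  (s_bounds : forall r, R0 < r -> r < s r /\ s r <= r ^+ 2)
  (s_liminf : exists c : R, 1 < c /\ \forall r \near +oo, c <= s r / r)
  (* the sequence *)
  (z_nz : forall n, z n != 0)
  (z_inf : (fun n => cabs (z n)) @ \oo --> +oo)
  (z_exp : (exp_conv z < 1%:E)%E)
  (hlambda0 : 0 <= lambda)
  (hlambda : f_exp_conv phi R0 z = lambda%:E)
  (* differentiability *)
  (phi_der : forall r, R0 < r -> derivable phi r 1)
  (s_der : forall r, R0 < r -> derivable s r 1)
  (s_cond : exists M : R,
      \forall r \near +oo, r ^+ 2 * derive1 s r / (s r) ^+ 2 <= M)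
  (ratio_cond :
      (exists c : R, (c%:E < inv_ext lambda)%E /\
         \forall r \near +oo, growth_ratio phi s r <= c)
   \/ (forall c : R, (c%:E < inv_ext lambda)%E ->
         \forall r \near +oo, c <= growth_ratio phi s r))
  (eps : R) (heps : 0 < eps) :
  exists C : R, exists R1 : R, forall w : Cx R,
    R1 <= cabs w ->
    (forall n, cabs (z n) `^ (- (lambda + eps)) < cabs (w - z n)) ->
    `| ln ((cabs (canon_prod z w))^-1) |
      <= C * (phi (s (cabs w)) `^ (lambda + eps) * ln (cabs w)).
Proof.
have s_gt r : R0 < r -> r < s r by move=> /s_bounds[].
have L0 : 0 <= lambda + eps by rewrite addr_ge0 // ltW.
apply: (@bound_of_weights R phi s z (lambda + eps)) => //.
case: ratio_cond => [ratio_le|ratio_ge].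
- exact: weights_limsup hR0 phi_pos phi_nd phi_bounds s_gt phi_der s_der
    z_inf hlambda0 hlambda heps ratio_le.
- exact: weights_liminf hR0 phi_pos s_gt phi_der s_der z_nz z_exp
    hlambda0 heps ratio_ge.
Qed.
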